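(* Let $r\geq 1$, let $\mathbf a=(a_1,\ldots,a_r)$ be positive integers, let $D$ be a positive common multiple of $a_1,\ldots,a_r$, and let $\sigma=a_1+\cdots+a_r$. For an integer $n\geq 0$ put $j=\lceil \frac{n+\sigma}{D}\rceil - r$ and $k= \lfloor \frac{n}{D}\rfloor - \lceil \frac{n+\sigma}{D} \rceil + r$. Then $$ (r-1)!\,p_{\mathbf a}(n) \equiv 0 \pmod{ (j+k+1)(j+k+2)\cdots (j+r-1)}, $$ where an empty product equals $1$.
   Context: $p_{\mathbf a}(n)$ is the number of integer solutions $(x_1,\ldots,x_r)$ of $a_1x_1+\cdots+a_rx_r=n$ with all $x_i\geq 0$. *)

From mathcomp Require Import all_boot all_order all_algebra.
Set Implicit Arguments. Unset Strict Implicit. Unset Printing Implicit Defensive.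
Import Order.TTheory GRing.Theory Num.Theory.

(* p_a(n): number of x in N^r with sum_i a_i x_i = n.  When every a_i >= 1,
   every solution has x_i <= n, so counting functions 'I_r -> 'I_(n+1)
   counts exactly all nonnegative integer solutions. *)
Definition p_a (r : nat) (a : 'I_r -> nat) (n : nat) : nat :=
  #|[set x : {ffun 'I_r -> 'I_n.+1} | (\sum_(i < r) a i * x i)%N == n]|.

Definition ceil_div (x d : nat) : nat := ((x + d.-1) %/ d)%N.

Definition jj (r D n sigma : nat) : int :=
  ((ceil_div (n + sigma) D)%:Z - r%:Z)%R.
Definition kk (r D n sigma : nat) : int :=
  ((n %/ D)%N%:Z - (ceil_div (n + sigma) D)%:Z + r%:Z)%R.

Definition int_range_prod (lo hi : int) : int :=
  if (lo <= hi)%R then (\prod_(t < `|(hi - lo + 1)%R|%N) (lo + t%:Z))%R else 1%R.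

From mathcomp Require Import all_boot all_order all_algebra zify.
Import Order.TTheory GRing.Theory Num.Theory.
Set Implicit Arguments. Unset Strict Implicit. Unset Printing Implicit Defensive.

(* Write each coordinate as x_i = z_i + (D / a_i) y_i with 0 <= z_i < D / a_i.
   Since a_i (D / a_i) = D, the weight becomes W(z) + D (y_1 + ... + y_r), so the
   solutions with a given residue vector z correspond to the compositions of
   N = (n - W(z)) / D into r parts, and there are C(N + r - 1, r - 1) of them.
   Hence (r-1)! p_a(n) is a sum of products (N+1)(N+2)...(N+r-1).  The product
   in the theorem is (q+1)...(c-1) with q = n %/ D and c = ceil((n + sigma) / D),
   and it divides each of these, because N <= q and W(z) + sigma <= r D gives
   c <= N + r. *)

Lemma ffactnD n m1 m2 : n ^_ (m1 + m2) = n ^_ m1 * (n - m1) ^_ m2.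
Proof.
elim: m1 n => [|m1 IH] n; first by rewrite ffactn0 mul1n subn0.
by rewrite addSn ffactnS IH ffactnS mulnA; congr (_ * _ ^_ _); lia.
Qed.

Lemma dvdn_ffact k l m n : k <= l -> m <= n -> m ^_ (m - l) %| n ^_ (n - k).
Proof.
move=> le_kl le_mn; have [le_ml|lt_lm] := leqP m l.
  by rewrite (eqnP le_ml) ffactn0 dvd1n.
have -> : n - k = (n - m) + ((m - l) + (l - k)) by lia.
by rewrite !ffactnD subKn // mulnA dvdn_mulr // dvdn_mull.
Qed.

Lemma ffact_prod_rev l L : (l + L) ^_ L = \prod_(t < L) (l.+1 + t).
Proof.
rewrite ffact_prod [RHS](reindex_inj rev_ord_inj) /=; apply: eq_bigr => t _.
by have := ltn_ord t; lia.
Qed.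

Lemma int_range_prodE (l m : nat) : int_range_prod l.+1 m = (m ^_ (m - l))%:Z%R.
Proof.
rewrite /int_range_prod; case: ifP => [lt_lm | /negbT le_ml]; last first.
  by have -> : m - l = 0 by lia.
have -> : `|(m%:Z - l.+1%:Z + 1)%R|%N = m - l by lia.
have -> : m ^_ (m - l) = \prod_(t < m - l) (l.+1 + t).
  by rewrite -ffact_prod_rev subnKC //; lia.
by rewrite -[RHS]natz natr_prod; apply: eq_bigr => t _; rewrite natz.
Qed.

Section ResidueFibers.

Variables (r : nat) (a : 'I_r -> nat) (D n : nat).
Hypotheses (a_gt0 : forall i, 0 < a i) (D_gt0 : 0 < D) (a_dvdD : forall i, a i %| D).

Local Notation period i := (D %/ a i).

Lemma mul_period i : a i * period i = D.
Proof. by rewrite mulnC divnK. Qed.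

Lemma period_gt0 i : 0 < period i.
Proof. by rewrite divn_gt0 // dvdn_leq. Qed.

Definition residue (x : {ffun 'I_r -> 'I_n.+1}) : {ffun 'I_r -> 'I_n.+1} :=
  [ffun i => inord (x i %% period i)].

Lemma residueE x i : residue x i = x i %% period i :> nat.
Proof. by rewrite ffunE inordK // ltnS (leq_trans (leq_mod _ _)) // -ltnS. Qed.

Definition fiber (z : {ffun 'I_r -> 'I_n.+1}) :=
  [set x : {ffun 'I_r -> 'I_n.+1} | (\sum_i a i * x i == n) && (residue x == z)].

Lemma weight_residue_quotient x :
  \sum_i a i * residue x i + D * \sum_i x i %/ period i = \sum_i a i * x i.
Proof.
rewrite big_distrr -big_split; apply: eq_bigr => i _ /=.
rewrite residueE [in RHS](divn_eq (x i) (period i)).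
by move: (period i) (mul_period i) => k <-; nia.
Qed.

Lemma residue_lt x i : residue x i < period i.
Proof. by rewrite residueE ltn_pmod ?period_gt0. Qed.

Lemma p_a_fibers : p_a a n = \sum_z #|fiber z|.
Proof.
rewrite /p_a -sum1_card (partition_big residue xpredT) //=.
apply: eq_bigr => z _; rewrite -sum1_card; apply: eq_bigl => x.
by rewrite !inE.
Qed.

Section OneFiber.

Variable x0 : {ffun 'I_r -> 'I_n.+1}.
Hypothesis x0_weight : \sum_i a i * x0 i = n.

Let z := residue x0.
Let N := \sum_i x0 i %/ period i.

Lemma weight_residue : \sum_i a i * z i + D * N = n.
Proof. exact: etrans (weight_residue_quotient x0) x0_weight. Qed.

Lemma quotient_sum_le : N <= n %/ D.
Proof. by rewrite leq_divRL // mulnC -weight_residue leq_addl. Qed.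

Lemma ceil_div_le : ceil_div (n + \sum_i a i) D <= N + r.
Proof.
have bound : \sum_i a i * z i + \sum_i a i <= r * D.
  rewrite -big_split -[r in r * D]card_ord -sum_nat_const /=.
  apply: leq_sum => i _; rewrite -(mul_period i) -mulnSr leq_mul2l.
  by rewrite residue_lt orbT.
rewrite /ceil_div -ltnS ltn_divLR //; have := weight_residue; nia.
Qed.

Let S := [set t : r.-tuple 'I_N.+1 | \sum_(i <- t) i == N].

Lemma weight_recompose (t : r.-tuple 'I_N.+1) :
  \sum_i a i * (z i + period i * tnth t i) = \sum_i a i * z i + D * \sum_(i <- t) i.
Proof.
rewrite big_tuple big_distrr -big_split; apply: eq_bigr => i _ /=.
by rewrite mulnDr mulnA mul_period.
Qed.

Definition recompose (t : r.-tuple 'I_N.+1) : {ffun 'I_r -> 'I_n.+1} :=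
  [ffun i => inord (z i + period i * tnth t i)].

Lemma recomposeE t i : t \in S -> recompose t i = z i + period i * tnth t i :> nat.
Proof.
rewrite inE => /eqP sum_t; rewrite ffunE inordK // ltnS.
apply: (@leq_trans (\sum_j a j * (z j + period j * tnth t j))).
  by rewrite (bigD1 i) //= (leq_trans (leq_pmull _ (a_gt0 i))) ?leq_addr.
by rewrite weight_recompose sum_t weight_residue.
Qed.

Lemma recompose_inj : {in S &, injective recompose}.
Proof.
move=> t1 t2 t1S t2S /ffunP eq_t12; apply: eq_from_tnth => i; apply: val_inj.
have := congr1 (@nat_of_ord _) (eq_t12 i); rewrite !recomposeE // => /addnI /eqP.
by rewrite eqn_pmul2l ?period_gt0 // => /eqP.
Qed.

Lemma fiberE : fiber z = recompose @: S.
Proof.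
apply/setP => x; rewrite inE; apply/andP/imsetP => [[/eqP x_n /eqP x_z] | [t tS ->]].
  have quotient_sum : \sum_i x i %/ period i = N.
    apply/eqP; rewrite -(eqn_pmul2l D_gt0) -(eqn_add2l (\sum_i a i * z i)).
    by rewrite weight_residue -x_z weight_residue_quotient x_n eqxx.
  have quotient_lt i : x i %/ period i < N.+1.
    by rewrite ltnS -quotient_sum (bigD1 i) //=; apply: leq_addr.
  pose t : r.-tuple 'I_N.+1 := [tuple inord (x i %/ period i) | i < r].
  have tE i : tnth t i = x i %/ period i :> nat by rewrite tnth_mktuple inordK.
  have tS : t \in S.
    by rewrite inE big_tuple -[N in _ == N]quotient_sum; apply/eqP/eq_bigr => i _.
  exists t => //; apply/ffunP => i; apply: ord_inj.
  by rewrite recomposeE // tE -x_z residueE addnC mulnC -divn_eq.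
have := tS; rewrite inE => /eqP sum_t; split; last first.
  apply/eqP/ffunP => i; apply: ord_inj.
  by rewrite residueE recomposeE // addnC mulnC modnMDl modn_small ?residue_lt.
under eq_bigr => i _ do rewrite recomposeE //.
by rewrite weight_recompose sum_t weight_residue.
Qed.

Lemma card_fiber : #|fiber z| = #|S|.
Proof. by rewrite fiberE card_in_imset //; apply: recompose_inj. Qed.

End OneFiber.

End ResidueFibers.

Lemma dvdn_fact_p_a m (a : 'I_m.+1 -> nat) D n
    (q := n %/ D) (c := ceil_div (n + \sum_i a i) D) :
  (forall i, 0 < a i) -> 0 < D -> (forall i, a i %| D) ->
  c.-1 ^_ (c.-1 - q) %| m`! * p_a a n.
Proof.
move=> a_gt0 D_gt0 a_dvdD.
rewrite (p_a_fibers a D) big_distrr; apply: dvdn_sum => z _ /=.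
have [->|/set0Pn [x0]] := eqVneq (fiber a D z) set0; first by rewrite cards0 muln0.
rewrite inE => /andP [/eqP x0_weight /eqP <-].
rewrite card_fiber // card_ord_partitions mulnC bin_ffact addnC.
have := ceil_div_le a_gt0 D_gt0 a_dvdD x0_weight.
have := quotient_sum_le D_gt0 a_dvdD x0_weight.
set N := \sum_i _ => N_le_q c_le.
by rewrite -[in X in _ %| _ ^_ X](addKn N m) dvdn_ffact //; lia.
Qed.

Unset Implicit Arguments.

Theorem corollary2p4 (r : nat) (a : 'I_r -> nat) (D n : nat) :
  (1 <= r)%N ->
  (forall i, (0 < a i)%N) ->
  (0 < D)%N ->
  (forall i, (a i %| D)%N) ->
  let sigma := (\sum_(i < r) a i)%N in
  let j := jj r D n sigma in
  let k := kk r D n sigma in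
  (int_range_prod (j + k + 1) (j + r%:Z - 1) %| ((r.-1)`! * p_a a n)%N%:Z)%Z.
Proof.
case: r a => [|m] a // _ a_gt0 D_gt0 a_dvdD; rewrite /= /jj /kk.
set c := ceil_div _ D; set q := n %/ D.
have c_gt0 : 0 < c.
  by rewrite divn_gt0 // big_ord_recl; have := a_gt0 ord0; lia.
have -> : (c%:Z - m.+1%:Z + (q%:Z - c%:Z + m.+1%:Z) + 1 = q.+1%:Z)%R by lia.
have -> : (c%:Z - m.+1%:Z + m.+1%:Z - 1 = c.-1%:Z)%R by lia.
by rewrite int_range_prodE dvdzE /=; apply: dvdn_fact_p_a.
Qed.
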